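(* If $G$ and $H$ are edge transitive graphs, then \[\chi_{vec}(G\times H)=\min\{\chi_{vec}(G),\chi_{vec}(H)\}.\]
   Context: Graphs are finite, simple and undirected. The categorical product $G\times H$ has vertex set $V(G)\times V(H)$, with $(u_1,v_1)\sim(u_2,v_2)$ iff $u_1\sim u_2$ and $v_1\sim v_2$. For a real $k>1$, a vector $k$-coloring of $G$ is a map $\varphi$ from $V(G)$ to the unit sphere of some $\mathbb{R}^d$ with $\varphi(u)^T\varphi(v)\le -\frac{1}{k-1}$ whenever $u\sim v$; the vector chromatic number $\chi_{vec}(G)$ is the smallest such $k$ (equal to $1$ for graphs with no edges). *)

From HB Require Import structures.
From mathcomp Require Import all_boot all_order all_algebra.
From mathcomp Require Import boolp classical_sets reals.
Set Implicit Arguments. Unset Strict Implicit. Unset Printing Implicit Defensive.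
Import Order.TTheory GRing.Theory Num.Theory.
Local Open Scope ring_scope.
Local Open Scope classical_set_scope.

Definition simple_graph (T : finType) (e : rel T) : Prop :=
  symmetric e /\ irreflexive e.

Definition cat_prod (T U : finType) (e : rel T) (f : rel U) : rel (T * U)%type :=
  fun p q => e p.1 q.1 && f p.2 q.2.

Definition is_automorphism (T : finType) (e : rel T) (s : T -> T) : Prop :=
  bijective s /\ forall u v, e (s u) (s v) = e u v.

Definition edge_transitive (T : finType) (e : rel T) : Prop :=
  forall u v x y, e u v -> e x y ->
    exists s, is_automorphism e s /\
      ((s u = x /\ s v = y) \/ (s u = y /\ s v = x)).

Definition dotv (R : realType) (d : nat) (x y : 'I_d -> R) : R :=
  \sum_(i < d) x i * y i.

Definition vector_coloring (R : realType) (T : finType) (e : rel T) (k : R)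
  (d : nat) (phi : T -> 'I_d -> R) : Prop :=
  (forall u, dotv (phi u) (phi u) = 1) /\
  (forall u v, e u v -> dotv (phi u) (phi v) <= - (k - 1)^-1).

Definition has_edge (T : finType) (e : rel T) : Prop := exists u v, e u v.

Definition chi_vec (R : realType) (T : finType) (e : rel T) : R :=
  if asbool (has_edge e) then
    inf [set k : R | 1 < k /\ exists d (phi : T -> 'I_d -> R), vector_coloring e k phi]
  else 1.

From HB Require Import structures.
From mathcomp Require Import all_boot all_order all_algebra.
From mathcomp Require Import boolp classical_sets reals.
From mathcomp Require Import fingroup perm ring lra.
Set Implicit Arguments. Unset Strict Implicit. Unset Printing Implicit Defensive.
Import Order.TTheory GRing.Theory Num.Theory.
Local Open Scope ring_scope.

(* An edge-transitive graph G with an edge is either bipartite, and then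
   chi_vec G = 2, or its automorphisms act transitively on the non-isolated
   vertices, all of the same degree D.  In the latter case the adjacency form
   A satisfies [-D/(chi_vec G - 1) |y|^2 <= y^T A y <= D |y|^2]: averaging
   [z z^T] over the automorphism group turns any [z] with [z^T A z < 0] into
   a vector colouring of value [1 - D |z|^2 / z^T A z], and the indicator of
   the non-isolated vertices attains [D].
   For the product, [A_G (x) A_H] is bounded below by
   [min(D_G l_H, l_G D_H)] (with [l = -D/(chi_vec - 1)]) since Kronecker
   products of positive semidefinite forms are positive semidefinite.
   Weighting a vector k-colouring of G x H by the indicator of non-isolated
   pairs then gives [min(chi_vec G, chi_vec H) <= k]; the other inequality
   holds because colourings pull back along the projections. *)

Section QuadraticForms.
Variables (R : realType) (X : finType).
Implicit Types (M N : X -> X -> R) (y z : X -> R).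

Definition bform M y z := \sum_a \sum_b M a b * y a * z b.
Definition qform M y := bform M y y.
Definition kdelta (a b : X) : R := (a == b)%:R.
Definition symm M := forall a b, M a b = M b a.
Definition psd M := forall y, 0 <= qform M y.

Lemma sum_kdelta a (F : X -> R) : \sum_b kdelta a b * F b = F a.
Proof.
rewrite (bigD1 a) //= /kdelta eqxx mul1r big1 ?addr0 // => b /negbTE.
by rewrite eq_sym => ->; rewrite mul0r.
Qed.

Lemma kdeltaC : symm kdelta.
Proof. by move=> a b; rewrite /kdelta eq_sym. Qed.

Lemma eq_qform M N y : (forall a b, M a b = N a b) -> qform M y = qform N y.
Proof. by move=> eqMN; apply: eq_bigr => a _; apply: eq_bigr => b _; rewrite eqMN. Qed.

Lemma qformD M N y :
  qform (fun a b => M a b + N a b) y = qform M y + qform N y.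
Proof.
rewrite /qform /bform -big_split; apply: eq_bigr => a _.
by rewrite -big_split; apply: eq_bigr => b _ /=; ring.
Qed.

Lemma qformB M N y :
  qform (fun a b => M a b - N a b) y = qform M y - qform N y.
Proof.
rewrite /qform /bform -sumrB; apply: eq_bigr => a _.
by rewrite -sumrB; apply: eq_bigr => b _; ring.
Qed.

Lemma qformZ c M y : qform (fun a b => c * M a b) y = c * qform M y.
Proof.
rewrite /qform /bform big_distrr; apply: eq_bigr => a _.
by rewrite big_distrr; apply: eq_bigr => b _ /=; ring.
Qed.

Lemma qform_kdelta y : qform kdelta y = \sum_a y a ^+ 2.
Proof.
apply: eq_bigr => a _; rewrite -[RHS](sum_kdelta a (fun b => y a * y b)).
by apply: eq_bigr => b _; ring.
Qed.

Lemma qform_kdelta_ge0 y : 0 <= qform kdelta y.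
Proof. by rewrite qform_kdelta sumr_ge0 // => a _; rewrite sqr_ge0. Qed.

Lemma qform_kdelta_gt0 M y : qform M y != 0 -> 0 < qform kdelta y.
Proof.
move=> qMy; rewrite lt_def qform_kdelta_ge0 andbT; apply: contraNneq qMy.
rewrite qform_kdelta => /(psumr_eq0P (fun b _ => sqr_ge0 (y b))) y0.
have {}y0 a : y a = 0 by apply/eqP; rewrite -sqrf_eq0 y0.
by rewrite /qform /bform big1 // => a _; rewrite big1 // => b _; rewrite !y0 !mulr0.
Qed.

Lemma bformC M y z : symm M -> bform M y z = bform M z y.
Proof.
move=> sM; rewrite /bform exchange_big /=; apply: eq_bigr => a _.
by apply: eq_bigr => b _; rewrite sM; ring.
Qed.

Lemma bform_kdeltal M a z : bform M (kdelta a) z = \sum_b M a b * z b.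
Proof.
rewrite /bform -(sum_kdelta a (fun c => \sum_b M c b * z b)).
by apply: eq_bigr => c _; rewrite big_distrr; apply: eq_bigr => b _ /=; ring.
Qed.

Lemma bform_kdelta M a b : bform M (kdelta a) (kdelta b) = M a b.
Proof.
rewrite bform_kdeltal -[RHS](sum_kdelta b (M a)).
by apply: eq_bigr => c _; rewrite kdeltaC mulrC.
Qed.

Lemma qformDv M y z s : symm M ->
  qform M (fun c => y c + s * z c) = qform M y + 2 * s * bform M y z + s ^+ 2 * qform M z.
Proof.
move=> sM; have linl y1 y2 (w : X -> R) :
    bform M (fun a => y1 a + s * y2 a) w = bform M y1 w + s * bform M y2 w.
  rewrite /bform big_distrr -big_split /=; apply: eq_bigr => a _.
  by rewrite big_distrr -big_split /=; apply: eq_bigr => b _; ring.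
rewrite /qform linl [bform M y _]bformC // [bform M z _]bformC // !linl.
by rewrite [bform M z y]bformC //; ring.
Qed.

Lemma psd_diag_ge0 M a : psd M -> 0 <= M a a.
Proof. by move=> pM; have := pM (kdelta a); rewrite /qform bform_kdelta. Qed.

(* Test the form on [kdelta b + s kdelta a] with [s] chosen so the value is [-1]. *)
Lemma psd_diag0 M a b : symm M -> psd M -> M a a = 0 -> M a b = 0.
Proof.
move=> sM pM Maa; have [//|Mab] := eqVneq (M a b) 0.
have := pM (fun c => kdelta b c + (- (M b b + 1) / (2 * M a b)) * kdelta a c).
rewrite qformDv // /qform !bform_kdelta Maa (sM b a) mulr0 addr0.
have -> : M b b + 2 * (- (M b b + 1) / (2 * M a b)) * M a b = -1 by field.
by rewrite lerNr oppr0 ler10.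
Qed.

Lemma psd_schur M a : symm M -> psd M -> 0 < M a a ->
  psd (fun b c => M b c - (M a a)^-1 * M a b * M a c).
Proof.
move=> sM pM Maa y; set m := \sum_b M a b * y b.
have -> : qform (fun b c => M b c - (M a a)^-1 * M a b * M a c) y =
    qform M y - (M a a)^-1 * m ^+ 2.
  rewrite qformB /m expr2 big_distrl big_distrr; congr (_ - _).
  apply: eq_bigr => b _; rewrite !big_distrr /=.
  by apply: eq_bigr => c _; ring.
have := pM (fun c => y c + (- m / M a a) * kdelta a c).
rewrite qformDv // /qform bform_kdelta bformC // bform_kdeltal -/m.
by congr (0 <= _); field; rewrite gt_eqF.
Qed.

(* Gaussian elimination: split off the rank-one part carried by one row of
   the support and recurse on the Schur complement. *)
Lemma psd_decomp_on (S : {set X}) M : symm M -> psd M ->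
    (forall a b, a \notin S -> M a b = 0) ->
  exists s : seq (R * (X -> R)), all (fun p => 0 <= p.1) s /\
    forall a b, M a b = \sum_(p <- s) p.1 * p.2 a * p.2 b.
Proof.
have [n] := ubnP #|S|; elim: n S M => // n IHn S M Sn sM pM suppM.
have [S0|[a aS]] := set_0Vmem S.
  by exists [::]; split=> // a b; rewrite big_nil suppM ?S0 ?inE.
have Sa : (#|S :\ a| < n)%N by rewrite (cardsD1 a) aS in Sn.
have supp_a N : (forall b c, b \notin S -> N b c = 0) -> (forall c, N a c = 0) ->
    forall b c, b \notin S :\ a -> N b c = 0.
  by move=> suppN Na b c; rewrite !inE negb_and negbK => /orP [/eqP -> | /suppN].
have [Maa0|Maa_neq0] := eqVneq (M a a) 0.
  by apply: (IHn (S :\ a)) => //; apply: supp_a => // c; apply: psd_diag0.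
have Maa : 0 < M a a by rewrite lt_def Maa_neq0 psd_diag_ge0.
pose M' b c := M b c - (M a a)^-1 * M a b * M a c.
have [s [s_ge0 Ms]] : exists s : seq (R * (X -> R)), all (fun p => 0 <= p.1) s /\
    forall b c, M' b c = \sum_(p <- s) p.1 * p.2 b * p.2 c.
  apply: (IHn (S :\ a)) => //; first by move=> b c; rewrite /M' sM; ring.
    exact: psd_schur.
  apply: supp_a => [b c bS|c]; last by rewrite /M'; field.
  by rewrite /M' (suppM b c bS) (sM a b) (suppM b a bS) !mulr0 mul0r subr0.
exists (((M a a)^-1, M a) :: s); split; first by rewrite /= s_ge0 invr_ge0 ltW.
by move=> b c; rewrite big_cons -Ms /M' /=; ring.
Qed.

Lemma psd_decomp M : symm M -> psd M ->
  exists s : seq (R * (X -> R)), all (fun p => 0 <= p.1) s /\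
    forall a b, M a b = \sum_(p <- s) p.1 * p.2 a * p.2 b.
Proof.
by move=> sM pM; apply: (@psd_decomp_on (finset.setT : {set X})) => // a b; rewrite inE.
Qed.

Lemma qform_le_rowsum M D : symm M -> (forall a b, 0 <= M a b) ->
  (forall a, \sum_b M a b <= D) -> forall y, qform M y <= D * qform kdelta y.
Proof.
move=> sM M_ge0 rowM y.
have amgm : 2 * qform M y <= \sum_a \sum_b M a b * (y a ^+ 2 + y b ^+ 2).
  rewrite /qform /bform big_distrr ler_sum // => a _.
  rewrite big_distrr ler_sum // => b _ /=.
  by have := mulr_ge0 (M_ge0 a b) (sqr_ge0 (y a - y b)); nra.
have symE : \sum_a \sum_b M a b * (y a ^+ 2 + y b ^+ 2) =
    2 * \sum_a (\sum_b M a b) * y a ^+ 2.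
  under eq_bigr => a _ do under eq_bigr => b _ do rewrite mulrDr.
  under eq_bigr => a _ do rewrite big_split /=.
  rewrite big_split /= [X in _ + X]exchange_big /= mulr2n mulrDl mul1r.
  congr (_ + _); apply: eq_bigr => a _; rewrite big_distrl //=.
  by apply: eq_bigr => b _; rewrite sM.
rewrite symE ler_pM2l ?ltr0Sn // in amgm.
rewrite (le_trans amgm) // qform_kdelta big_distrr ler_sum // => a _.
by rewrite ler_wpM2r ?sqr_ge0.
Qed.

Lemma psd_sub_lower M l : (forall y, l * qform kdelta y <= qform M y) ->
  psd (fun a b => M a b - l * kdelta a b).
Proof. by move=> lM y; rewrite qformB qformZ subr_ge0. Qed.

Lemma psd_sub_upper M u : (forall y, qform M y <= u * qform kdelta y) ->
  psd (fun a b => u * kdelta a b - M a b).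
Proof. by move=> uM y; rewrite qformB qformZ subr_ge0. Qed.

Lemma bform_decomp M (s : seq (R * (X -> R))) y z :
    (forall a b, M a b = \sum_(p <- s) p.1 * p.2 a * p.2 b) ->
  bform M y z = \sum_(p <- s) p.1 * (\sum_a p.2 a * y a) * (\sum_b p.2 b * z b).
Proof.
move=> Ms; rewrite /bform.
under eq_bigr => a _ do under eq_bigr => b _ do rewrite Ms !big_distrl /=.
under eq_bigr => a _ do rewrite exchange_big /=.
rewrite exchange_big /=; apply: eq_bigr => p _.
rewrite -mulrA big_distrl big_distrr /=; apply: eq_bigr => a _.
by rewrite !big_distrr /=; apply: eq_bigr => b _; ring.
Qed.

End QuadraticForms.
Arguments kdelta {R X}.

Section Kronecker.
Variables (R : realType) (T U : finType).
Implicit Types (A : T -> T -> R) (B : U -> U -> R).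

Definition kron A B (a b : T * U) : R := A a.1 b.1 * B a.2 b.2.
Definition kronv (x : T -> R) (y : U -> R) (a : T * U) : R := x a.1 * y a.2.

Lemma sum_pair (F : T * U -> R) : \sum_a F a = \sum_u \sum_v F (u, v).
Proof. by rewrite pair_bigA; apply: eq_bigr => -[]. Qed.

Lemma kron_kdelta a b : kron kdelta kdelta a b = kdelta a b :> R.
Proof.
case: a b => [a1 a2] [b1 b2]; rewrite /kron /kdelta xpair_eqE /=.
by case: (a1 == b1); rewrite ?mul1r ?mul0r.
Qed.

Lemma qform_kron A B z : qform (kron A B) z =
  \sum_u \sum_u' A u u' * bform B (fun v => z (u, v)) (fun v => z (u', v)).
Proof.
rewrite /qform /bform sum_pair; apply: eq_bigr => u _.
under eq_bigr => v _ do rewrite sum_pair /=.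
rewrite exchange_big; apply: eq_bigr => u' _ /=.
rewrite big_distrr /=; apply: eq_bigr => v _.
by rewrite big_distrr /=; apply: eq_bigr => v' _; rewrite /kron /=; ring.
Qed.

Lemma qform_kronv A B x y : qform (kron A B) (kronv x y) = qform A x * qform B y.
Proof.
rewrite qform_kron /qform /bform big_distrl; apply: eq_bigr => u _.
rewrite big_distrl; apply: eq_bigr => u' _ /=; rewrite !big_distrr.
by apply: eq_bigr => v _; rewrite !big_distrr; apply: eq_bigr => v' _ /=; rewrite /kronv; ring.
Qed.

(* Expanding [B] as a nonnegative sum of rank-one forms reduces the form of
   [kron A B] to a nonnegative combination of forms of [A]. *)
Lemma psd_kron A B : symm B -> psd A -> psd B -> psd (kron A B).
Proof.
move=> sB pA pB z; have [s [s_ge0 Bs]] := psd_decomp sB pB.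
pose y (p : R * (U -> R)) u := \sum_v p.2 v * z (u, v).
have -> : qform (kron A B) z = \sum_(p <- s) p.1 * qform A (y p).
  rewrite qform_kron; under eq_bigr => u _ do under eq_bigr => u' _ do
    rewrite (bform_decomp _ _ Bs) big_distrr /=.
  under eq_bigr => u _ do rewrite exchange_big /=.
  rewrite exchange_big /=; apply: eq_bigr => p _.
  rewrite /qform /bform [RHS]big_distrr; apply: eq_bigr => u _.
  by rewrite [RHS]big_distrr; apply: eq_bigr => u' _ /=; rewrite /y; ring.
rewrite big_seq sumr_ge0 // => p /(allP s_ge0) p_ge0.
exact: mulr_ge0.
Qed.

(* Combine the four Kronecker products of the nonnegative forms [A - lA I],
   [DA I - A], [B - lB I], [DB I - B] so that everything but [kron A B] and
   the identity cancels. *)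
Lemma qform_kron_ge A B lA DA lB DB : symm A -> symm B ->
    lA < 0 -> 0 < DA -> lB < 0 -> 0 < DB ->
    (forall y, lA * qform kdelta y <= qform A y) ->
    (forall y, qform A y <= DA * qform kdelta y) ->
    (forall y, lB * qform kdelta y <= qform B y) ->
    (forall y, qform B y <= DB * qform kdelta y) ->
  forall z, Num.min (DA * lB) (lA * DB) * qform kdelta z <= qform (kron A B) z.
Proof.
move=> sA sB lA0 DA0 lB0 DB0 lowA upA lowB upB z.
set mu := Num.min _ _.
pose PA a b := A a b - lA * kdelta a b; pose QA a b := DA * kdelta a b - A a b.
pose PB a b := B a b - lB * kdelta a b; pose QB a b := DB * kdelta a b - B a b.
have sPB : symm PB by move=> a b; rewrite /PB sB kdeltaC.
have sQB : symm QB by move=> a b; rewrite /QB sB kdeltaC.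
have pPA := psd_sub_lower lowA; have pQA := psd_sub_upper upA.
have pPB := psd_sub_lower lowB; have pQB := psd_sub_upper upB.
have k1 := psd_kron sPB pPA pPB z; have k2 := psd_kron sQB pPA pQB z.
have k3 := psd_kron sPB pQA pPB z; have k4 := psd_kron sQB pQA pQB z.
have mu_le1 : mu <= DA * lB by rewrite ge_min lexx.
have mu_le2 : mu <= lA * DB by rewrite ge_min lexx orbT.
have mu_lt0 : mu < 0 by apply: le_lt_trans mu_le1 _; rewrite pmulr_rlt0.
have gap_gt0 : 0 < (DA - lA) * (DB - lB).
  by rewrite mulr_gt0 // subr_gt0; [exact: lt_trans DA0|exact: lt_trans DB0].
rewrite -subr_ge0 -(pmulr_rge0 _ gap_gt0) mulrBr.
have -> : (DA - lA) * (DB - lB) * (mu * qform kdelta z) =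
    qform (fun a b => ((DA - lA) * (DB - lB) * mu) * kdelta a b) z by rewrite qformZ mulrA.
have -> : (DA - lA) * (DB - lB) * qform (kron A B) z =
    (DA * DB - mu) * qform (kron PA PB) z + (DA * lB - mu) * qform (kron PA QB) z +
    (lA * DB - mu) * qform (kron QA PB) z + (lA * lB - mu) * qform (kron QA QB) z +
    qform (fun a b => ((DA - lA) * (DB - lB) * mu) * kdelta a b) z.
  rewrite -!qformZ -!qformD; apply: eq_qform => a b.
  by rewrite -kron_kdelta /kron /PA /PB /QA /QB; ring.
rewrite addrK !addr_ge0 // mulr_ge0 // subr_ge0 //.
- by rewrite (le_trans (ltW mu_lt0)) // mulr_ge0 // ltW.
- by rewrite (le_trans (ltW mu_lt0)) // nmulr_rge0 // ltW.
Qed.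

End Kronecker.

Section VectorColorings.
Variables (R : realType) (T : finType).
Implicit Types (e : rel T) (k : R).

Definition adj e (a b : T) : R := (e a b)%:R.

Definition vector_colorable e k : Prop :=
  1 < k /\ exists d (phi : T -> 'I_d -> R), vector_coloring e k phi.

Definition bipartite e : Prop := exists c : T -> bool, forall u v, e u v -> c u != c v.

Lemma adjC e : symmetric e -> symm (adj e).
Proof. by move=> se a b; rewrite /adj se. Qed.

Lemma dotv_ge_N1 d (x y : 'I_d -> R) : dotv x x = 1 -> dotv y y = 1 -> -1 <= dotv x y.
Proof.
move=> x1 y1; have : 0 <= \sum_i (x i + y i) ^+ 2.
  by rewrite sumr_ge0 // => i _; rewrite sqr_ge0.
have -> : \sum_i (x i + y i) ^+ 2 = dotv x x + 2 * dotv x y + dotv y y.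
  by rewrite /dotv big_distrr -!big_split /=; apply: eq_bigr => i _; ring.
by rewrite x1 y1; lra.
Qed.

Lemma vector_colorable_ge2 e k : has_edge e -> vector_colorable e k -> 2 <= k.
Proof.
move=> [u [v euv]] [k1 [d [phi [phi1 phiE]]]].
have := le_trans (dotv_ge_N1 (phi1 u) (phi1 v)) (phiE _ _ euv).
by rewrite lerN2 invf_le1 ?subr_gt0 //; lra.
Qed.

Lemma vector_colorable_mono e k k' : vector_colorable e k -> k <= k' -> vector_colorable e k'.
Proof.
move=> [k1 [d [phi [phi1 phiE]]]] kk'; have k'1 := lt_le_trans k1 kk'.
split=> //; exists d, phi; split=> // u v /phiE /le_trans; apply.
by rewrite lerN2 lef_pV2 ?posrE ?subr_gt0 // lerD2r.
Qed.

Lemma vector_colorable2_bipartite e : bipartite e -> vector_colorable e 2.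
Proof.
move=> [c hc]; split; first by rewrite ltr1n.
exists 1%N, (fun u _ => if c u then 1 else -1); split=> [u|u v /hc].
  by rewrite /dotv big_ord1; case: (c u); rewrite ?mulr1 ?mulrNN ?mulr1.
rewrite /dotv big_ord1 -[2]/(1 + 1) addrK invr1.
by case: (c u); case: (c v); rewrite //= ?mulrN1 ?mulr1.
Qed.

Lemma vector_coloring_fam (I : finType) e k (v : T -> I -> R) :
    (forall u, \sum_i v u i * v u i = 1) ->
    (forall u w, e u w -> \sum_i v u i * v w i <= - (k - 1)^-1) ->
  exists d (phi : T -> 'I_d -> R), vector_coloring e k phi.
Proof.
move=> v1 vE; exists #|I|, (fun u j => v u (enum_val j)).
by split=> [u|u w /vE]; rewrite /dotv -(big_enum_val (fun i => v _ i * v _ i)) ?v1.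
Qed.

Lemma sum_qform_coloring (M : T -> T -> R) (w : T -> R) d (phi : T -> 'I_d -> R) :
  \sum_i qform M (fun a => w a * phi a i) =
  \sum_a \sum_b M a b * w a * w b * dotv (phi a) (phi b).
Proof.
rewrite exchange_big; apply: eq_bigr => a _; rewrite exchange_big.
apply: eq_bigr => b _; rewrite /dotv big_distrr.
by apply: eq_bigr => i _ /=; ring.
Qed.

(* Sum the lower bound over the coordinate vectors [a |-> w a * phi a i]. *)
Lemma qform_bound_coloring e k d (phi : T -> 'I_d -> R) l (w : T -> R) :
    vector_coloring e k phi -> (forall a, 0 <= w a) ->
    (forall y, l * qform kdelta y <= qform (adj e) y) ->
  l * qform kdelta w <= - (k - 1)^-1 * qform (adj e) w.
Proof.
move=> [phi1 phiE] w_ge0 low_e.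
have -> : qform kdelta w = \sum_i qform kdelta (fun a => w a * phi a i).
  rewrite sum_qform_coloring qform_kdelta; apply: eq_bigr => a _.
  rewrite (eq_bigr (fun b => kdelta a b * (w a * w b * dotv (phi a) (phi b)))).
    by rewrite sum_kdelta phi1 mulr1 expr2.
  by move=> b _; ring.
rewrite big_distrr /= (le_trans (ler_sum _ (fun i _ => low_e _))) //.
rewrite sum_qform_coloring /qform /bform big_distrr ler_sum // => a _.
rewrite big_distrr ler_sum // => b _ /=; rewrite /adj.
case: (boolP (e a b)) => [eab|_]; last by rewrite !mul0r mulr0.
by rewrite mul1r [X in _ <= X]mulrC ler_wpM2l ?mulr_ge0 ?phiE.
Qed.

End VectorColorings.

Lemma vector_colorable_hom (R : realType) (T T' : finType) (e : rel T) (e' : rel T')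
    (h : T' -> T) (k : R) :
  (forall a b, e' a b -> e (h a) (h b)) -> vector_colorable e k -> vector_colorable e' k.
Proof.
move=> hom [k1 [d [phi [phi1 phiE]]]]; split=> //.
by exists d, (phi \o h); split=> [a|a b /hom /phiE //]; apply: phi1.
Qed.

Section ChiVec.
Variables (R : realType) (T : finType) (e : rel T).

Lemma chi_vec_edge : has_edge e -> chi_vec R e = inf (vector_colorable e).
Proof. by move=> he; rewrite /chi_vec asboolT. Qed.

Lemma chi_vec_noedge : ~ has_edge e -> chi_vec R e = 1.
Proof. by move=> he; rewrite /chi_vec asboolF. Qed.

Lemma chi_vec_le k : has_edge e -> vector_colorable e k -> chi_vec R e <= k.
Proof.
move=> he ek; rewrite chi_vec_edge //; apply: ge_inf ek.
by exists 1 => y [/ltW].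
Qed.

Lemma chi_vec_ge m : has_edge e -> (exists k : R, vector_colorable e k) ->
  (forall k, vector_colorable e k -> m <= k) -> m <= chi_vec R e.
Proof. by move=> he [k ek] mS; rewrite chi_vec_edge //; apply: lb_le_inf => //; exists k. Qed.

Lemma chi_vec_ge2 : has_edge e -> (exists k : R, vector_colorable e k) -> 2 <= chi_vec R e.
Proof. by move=> he ex; apply: chi_vec_ge => // k; apply: vector_colorable_ge2. Qed.

End ChiVec.

Lemma chi_vec_hom (R : realType) (T T' : finType) (e : rel T) (e' : rel T') (h : T' -> T) :
    (forall a b, e' a b -> e (h a) (h b)) -> has_edge e -> has_edge e' ->
    (exists k : R, vector_colorable e k) ->
  chi_vec R e' <= chi_vec R e.
Proof.
move=> hom he he' [k ek]; rewrite [X in _ <= X]chi_vec_edge //.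
apply: lb_le_inf; first by exists k.
by move=> k' /(vector_colorable_hom hom); apply: chi_vec_le.
Qed.

Section Automorphisms.
Variables (T : finType) (e : rel T).
Implicit Types s t : {perm T}.

Definition autp (s : {perm T}) : bool := [forall u, [forall v, e (s u) (s v) == e u v]].

Lemma autpP s : reflect (forall u v, e (s u) (s v) = e u v) (autp s).
Proof.
apply: (iffP forallP) => [h u v|h u]; last by apply/forallP => v; rewrite h.
by have /forallP/(_ v)/eqP := h u.
Qed.

Lemma autp1 : autp 1%g.
Proof. by apply/autpP => u v; rewrite !perm1. Qed.

Lemma autpM s t : autp s -> autp t -> autp (s * t)%g.
Proof. by move=> /autpP sA /autpP tA; apply/autpP => u v; rewrite !permM tA sA. Qed.

Lemma autpV s : autp s -> autp s^-1%g.
Proof. by move=> /autpP sA; apply/autpP => u v; rewrite -sA !permKV. Qed.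

Lemma autp_is_automorphism (s : T -> T) :
  is_automorphism e s -> exists2 t, autp t & forall x, t x = s x.
Proof.
move=> [/bij_inj s_inj sA]; exists (perm s_inj) => [|x]; last by rewrite permE.
by apply/autpP => u v; rewrite !permE.
Qed.

Lemma sum_autpM (R : realType) t (F : {perm T} -> R) : autp t ->
  \sum_(s | autp s) F (t * s)%g = \sum_(s | autp s) F s.
Proof.
move=> tA; rewrite [RHS](reindex_inj (mulgI t)); apply: eq_bigl => s.
apply/idP/idP => [sA|]; first exact: autpM.
by rewrite -{2}(mulKg t s); apply: autpM; apply: autpV.
Qed.

Definition nonisolated (u : T) : bool := [exists v, e u v].

Lemma autp_nonisolated s u : autp s -> nonisolated (s u) = nonisolated u.
Proof.
move=> /autpP sA; apply/existsP/existsP => -[v].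
  by rewrite -{1}(permKV s v) sA; exists (s^-1%g v).
by rewrite -sA; exists (s v).
Qed.

Hypothesis et : edge_transitive e.

Lemma edge_orbit u0 v0 a b : e u0 v0 -> e a b ->
  (exists2 s, autp s & s u0 = a) \/ (exists2 s, autp s & s u0 = b).
Proof.
move=> e0 eab; have [s [sA sE]] := et e0 eab.
have [t tA ts] := autp_is_automorphism sA.
by case: sE => -[su0 _]; [left|right]; exists t; rewrite ?ts.
Qed.

(* If some non-isolated [w] were outside the orbit of [u0], the orbit of
   [u0] would be one side of a bipartition: every edge meets exactly one of
   the two orbits. *)
Lemma nonisolated_orbit u0 v0 w : ~ bipartite e -> e u0 v0 -> nonisolated w ->
  exists2 s, autp s & s u0 = w.
Proof.
move=> nbip e0 /existsP [w' ew]; apply: contrapT => notO; apply: nbip.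
pose O a := exists2 s, autp s & s u0 = a.
have disj a : O a -> (exists2 t, autp t & t w = a) -> False.
  move=> [s sA su0] [t tA tw]; apply: notO; exists (s * t^-1)%g.
    by apply: autpM => //; apply: autpV.
  by rewrite permM su0 -tw permK.
exists (fun a => `[< O a >]) => a b eab.
have [Oa|Ob] := edge_orbit e0 eab; have [Wa|Wb] := edge_orbit ew eab.
- by case: (disj _ Oa Wa).
- by rewrite (asboolT Oa) (asboolF (fun Ob => disj _ Ob Wb)).
- by rewrite (asboolT Ob) (asboolF (fun Oa => disj _ Oa Wa)).
- by case: (disj _ Ob Wb).
Qed.

End Automorphisms.

Section EdgeTransitiveGraph.
Variables (R : realType) (T : finType) (e : rel T) (u0 v0 : T).
Hypotheses (se : symmetric e) (et : edge_transitive e) (nbip : ~ bipartite e).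
Hypothesis e0 : e u0 v0.

Definition degree (u : T) : R := \sum_v adj R e u v.

Let D := degree u0.
Let N := \sum_a (nonisolated e a)%:R : R.

Lemma degree_nonisolated a : degree a = (nonisolated e a)%:R * D.
Proof.
have [|/existsPn isol] := boolP (nonisolated e a).
  move=> /(nonisolated_orbit et nbip e0) [s /autpP sA <-].
  rewrite mul1r /degree /D (reindex_inj (@perm_inj _ s)).
  by apply: eq_bigr => v _; rewrite /adj sA.
by rewrite mul0r /degree big1 // => v _; rewrite /adj (negbTE (isol v)).
Qed.

Lemma degree_gt0 : 0 < D.
Proof.
by rewrite /D /degree (bigD1 v0) //= {1}/adj e0 ltr_pwDl ?ltr01 // sumr_ge0.
Qed.

Lemma sum_nonisolated_gt0 : 0 < N.
Proof.
rewrite /N (bigD1 u0) //= ltr_pwDl ?sumr_ge0 // ltr0n lt0b.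
by apply/existsP; exists v0.
Qed.

Lemma nonisolated_norm_gt0 : 0 < qform kdelta (fun a => (nonisolated e a)%:R : R).
Proof.
rewrite qform_kdelta (bigD1 u0) //= ltr_pwDl ?sumr_ge0 // => [|a _]; last exact: sqr_ge0.
have -> : nonisolated e u0 by apply/existsP; exists v0.
by rewrite expr1n ltr01.
Qed.

Lemma qform_adj_le y : qform (adj R e) y <= D * qform kdelta y.
Proof.
apply: qform_le_rowsum => [|a b|a]; first exact: adjC; first by rewrite ler0n.
rewrite -/(degree a) degree_nonisolated ler_piMl ?(ltW degree_gt0) //.
by case: (nonisolated e a).
Qed.

Lemma qform_adj_nonisolated :
  qform (adj R e) (fun a => (nonisolated e a)%:R) =
  D * qform kdelta (fun a => (nonisolated e a)%:R).
Proof.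
rewrite qform_kdelta big_distrr; apply: eq_bigr => a _ /=.
rewrite -[RHS]mulrC expr2 -mulrA -degree_nonisolated mulr_sumr; apply: eq_bigr => b _.
rewrite /adj; case: (boolP (e a b)) => [eab|_]; last by rewrite !mul0r mulr0.
have -> : nonisolated e a by apply/existsP; exists b.
have -> : nonisolated e b by apply/existsP; exists a; rewrite se.
by rewrite !mulr1.
Qed.

Section AutGram.
Variable z : T -> R.
Hypothesis z_supp : forall a, ~~ nonisolated e a -> z a = 0.

Definition aut_gram a b : R := \sum_(s | autp e s) z (s a) * z (s b).

Let n_aut : R := \sum_(s | autp e s) 1.

Lemma aut_gram_autp t a b : autp e t -> aut_gram (t a) (t b) = aut_gram a b.
Proof.
move=> tA; rewrite /aut_gram -(sum_autpM (fun s => z (s a) * z (s b)) tA).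
by apply: eq_bigr => s _; rewrite !permM.
Qed.

Lemma aut_gram_edge a b : e a b -> aut_gram a b = aut_gram u0 v0.
Proof.
move=> eab; have [s [/autp_is_automorphism [t tA ts] sE]] := et e0 eab.
case: sE => -[su0 sv0]; rewrite -(aut_gram_autp u0 v0 tA) !ts su0 sv0 //.
by rewrite /aut_gram; apply: eq_bigr => r _; rewrite mulrC.
Qed.

Lemma aut_gram_diag a : aut_gram a a = (nonisolated e a)%:R * aut_gram u0 u0.
Proof.
have [/(nonisolated_orbit et nbip e0) [s sA <-]|isol] := boolP (nonisolated e a).
  by rewrite mul1r aut_gram_autp.
by rewrite mul0r /aut_gram big1 // => s sA; rewrite z_supp ?mul0r ?autp_nonisolated.
Qed.

Lemma sum_aut_gram M : (forall s a b, autp e s -> M (s a) (s b) = M a b) ->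
  \sum_a \sum_b M a b * aut_gram a b = n_aut * qform M z.
Proof.
move=> M_inv; under eq_bigr => a _ do under eq_bigr => b _ do
  rewrite /aut_gram big_distrr.
under eq_bigr => a _ do rewrite exchange_big.
rewrite exchange_big big_distrl; apply: eq_bigr => s sA /=.
rewrite mul1r /qform /bform [RHS](reindex_inj (@perm_inj _ s)); apply: eq_bigr => a _.
rewrite [RHS](reindex_inj (@perm_inj _ s)); apply: eq_bigr => b _ /=.
by rewrite M_inv // mulrA.
Qed.

Lemma n_aut_gt0 : 0 < n_aut.
Proof. by rewrite /n_aut (bigD1 1%g) ?autp1 //= ltr_pwDl ?ltr01 ?sumr_ge0. Qed.

Lemma sum_adj_aut_gram : aut_gram u0 v0 * (D * N) = n_aut * qform (adj R e) z.
Proof.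
rewrite -sum_aut_gram => [|s a b /autpP sA]; last by rewrite /adj sA.
rewrite /N mulr_sumr mulr_sumr; apply: eq_bigr => a _.
rewrite [D * _]mulrC -degree_nonisolated mulr_sumr; apply: eq_bigr => b _.
by rewrite /adj; case: (boolP (e a b)) => [/aut_gram_edge ->|_];
  rewrite ?mul1r ?mulr1 ?mul0r ?mulr0.
Qed.

Lemma sum_diag_aut_gram : N * aut_gram u0 u0 = n_aut * qform kdelta z.
Proof.
rewrite -sum_aut_gram => [|s a b _]; last by rewrite /kdelta (inj_eq perm_inj).
rewrite /N mulr_suml; apply: eq_bigr => a _.
by rewrite sum_kdelta (aut_gram_diag a).
Qed.

(* The vectors [(z (s a))_s / sqrt r] have norm [1] on non-isolated vertices
   and inner product [c / r] on every edge, and comparing the two averages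
   [sum_adj_aut_gram], [sum_diag_aut_gram] identifies [c / r] with the Rayleigh
   quotient [qform (adj e) z / (D * qform kdelta z)]. *)
Lemma vector_colorable_supported : qform (adj R e) z < 0 ->
  vector_colorable e (1 - D * qform kdelta z / qform (adj R e) z).
Proof.
move=> q_lt0; set q := qform (adj R e) z; set n := qform kdelta z.
set c := aut_gram u0 v0; set r := aut_gram u0 u0.
have n_gt0 : 0 < n := qform_kdelta_gt0 (ltr0_neq0 q_lt0).
have Dn_gt0 : 0 < D * n by rewrite mulr_gt0 ?degree_gt0.
have r_gt0 : 0 < r.
  have : 0 < N * r by rewrite sum_diag_aut_gram mulr_gt0 ?n_aut_gt0.
  by rewrite pmulr_rgt0 ?sum_nonisolated_gt0.
have ratio : c / r = - (1 - D * n / q - 1)^-1.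
  have -> : - (1 - D * n / q - 1)^-1 = q / (D * n).
    field; rewrite (gt_eqF n_gt0) (gt_eqF degree_gt0) (ltr0_neq0 q_lt0) /=.
    have -> : q - D * n + -1 * q = - (D * n) by ring.
    by rewrite oppr_eq0 gt_eqF.
  apply/eqP; rewrite eqr_div ?(gt_eqF r_gt0) ?(gt_eqF Dn_gt0) //; apply/eqP.
  apply: (mulIf (lt0r_neq0 sum_nonisolated_gt0)); apply: (mulfI (lt0r_neq0 n_aut_gt0)).
  transitivity (c * (D * N) * (n_aut * n)); first by ring.
  by rewrite sum_adj_aut_gram -sum_diag_aut_gram -/q -/r; ring.
split; first by rewrite ltrDl oppr_gt0 (pmulr_rlt0 _ Dn_gt0) invr_lt0.
pose v a s := if nonisolated e a then (autp e s)%:R * z (s a) / Num.sqrt r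
              else (s == 1%g)%:R.
have gramE a b : nonisolated e a -> nonisolated e b ->
    \sum_s v a s * v b s = aut_gram a b / r.
  move=> ia ib; rewrite /v ia ib /aut_gram mulr_suml [RHS]big_mkcond.
  apply: eq_bigr => s _.
  have sqrt_r : Num.sqrt r ^+ 2 = r by rewrite sqr_sqrtr ?ltW.
  case: (autp e s); rewrite ?mul0r ?mul1r // -[X in _ = _ / X]sqrt_r; field.
  by rewrite sqrtr_eq0 -ltNge.
apply: (@vector_coloring_fam _ _ {perm T} _ _ v) => [a|a b eab].
  case: (boolP (nonisolated e a)) => [ia|isol].
    by rewrite gramE // aut_gram_diag ia mul1r divff ?gt_eqF.
  rewrite /v (negbTE isol) (bigD1 1%g) //= eqxx mulr1 big1 ?addr0 // => s.
  by move=> /negbTE ->; rewrite mul0r.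
have ia : nonisolated e a by apply/existsP; exists b.
have ib : nonisolated e b by apply/existsP; exists a; rewrite se.
by rewrite gramE // aut_gram_edge // -ratio.
Qed.

End AutGram.

Lemma vector_colorable_qform z : qform (adj R e) z < 0 ->
  vector_colorable e (1 - D * qform kdelta z / qform (adj R e) z).
Proof.
move=> q_lt0; pose z' a := (nonisolated e a)%:R * z a.
have qE : qform (adj R e) z' = qform (adj R e) z.
  apply: eq_bigr => a _; apply: eq_bigr => b _; rewrite /z' /adj.
  case: (boolP (e a b)) => [eab|_]; last by rewrite !mul0r.
  have -> : nonisolated e a by apply/existsP; exists b.
  have -> : nonisolated e b by apply/existsP; exists a; rewrite se.
  by rewrite !mul1r.
have nE : qform kdelta z' <= qform kdelta z.
  rewrite !qform_kdelta ler_sum // => a _; rewrite /z'.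
  by case: (nonisolated e a); rewrite ?mul1r ?mul0r ?expr0n ?sqr_ge0.
have supp a : ~~ nonisolated e a -> z' a = 0 by move=> /negbTE isol; rewrite /z' isol mul0r.
have := vector_colorable_supported supp; rewrite qE => /(_ q_lt0) /vector_colorable_mono.
apply; rewrite lerD2l lerN2; apply: ler_wnM2r; first by rewrite invr_le0 ltW.
by rewrite ler_wpM2l // ltW ?degree_gt0.
Qed.

Hypothesis ie : irreflexive e.

Lemma vector_colorable_exists : exists k : R, vector_colorable e k.
Proof.
pose z c : R := kdelta u0 c + (-1) * kdelta v0 c.
have : qform (adj R e) z < 0.
  rewrite /z qformDv; last exact: adjC.
  by rewrite /qform !bform_kdelta /adj e0 !ie /=; lra.
by move/vector_colorable_qform => ek; eexists; exact: ek.
Qed.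

Lemma chi_vec_gt1 : 1 < chi_vec R e.
Proof.
apply: lt_le_trans (chi_vec_ge2 _ vector_colorable_exists); first by rewrite ltr1n.
by exists u0, v0.
Qed.

Lemma qform_adj_ge y : D / (1 - chi_vec R e) * qform kdelta y <= qform (adj R e) y.
Proof.
have he : has_edge e by exists u0, v0.
have chi_gt1 := chi_vec_gt1.
have [q_ge0|q_lt0] := leP 0 (qform (adj R e) y).
  apply: le_trans q_ge0; rewrite mulr_le0_ge0 ?qform_kdelta_ge0 //.
  by rewrite mulr_ge0_le0 ?invr_le0 ?subr_le0 ?ltW ?degree_gt0.
have chi_le := chi_vec_le he (vector_colorable_qform q_lt0).
have chi_lt1 : 1 - chi_vec R e < 0 by rewrite subr_lt0.
rewrite mulrAC ler_ndivrMr // -[X in _ <= X](@divfK _ (qform (adj R e) y)) ?ltr0_neq0 //.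
by rewrite [X in _ <= X]mulrC (ler_nM2l q_lt0); lra.
Qed.

End EdgeTransitiveGraph.

Lemma le_of_inv_bound (R : realType) (X c k : R) : 0 < X -> 1 < c -> 1 < k ->
  X / (1 - c) <= - (k - 1)^-1 * X -> c <= k.
Proof.
move=> X_gt0 c1 k1; rewrite mulrC (ler_pM2r X_gt0) -opprB invrN lerN2.
by rewrite lef_pV2 ?posrE ?subr_gt0 // lerD2r.
Qed.

Section CategoricalProduct.
Variables (R : realType) (T U : finType) (e : rel T) (f : rel U).

Lemma has_edge_cat_prod : has_edge (cat_prod e f) <-> has_edge e /\ has_edge f.
Proof.
split=> [[a [b /andP [eab fab]]]|[[u [u' euu']] [v [v' fvv']]]].
  by split; [exists a.1, b.1 | exists a.2, b.2].
by exists (u, v), (u', v'); rewrite /cat_prod /= euu' fvv'.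
Qed.

Lemma adj_cat_prod a b : adj R (cat_prod e f) a b = kron (adj R e) (adj R f) a b.
Proof.
by rewrite /adj /kron /cat_prod; case: (e _ _); case: (f _ _); rewrite ?mulr1 ?mulr0.
Qed.

(* The Kronecker lower bound for the product adjacency, evaluated on the
   indicator of the non-isolated pairs through [qform_bound_coloring]. *)
Lemma chi_vec_min_le_colorable k : simple_graph e -> simple_graph f ->
    edge_transitive e -> edge_transitive f -> ~ bipartite e -> ~ bipartite f ->
    has_edge e -> has_edge f -> vector_colorable (cat_prod e f) k ->
  Num.min (chi_vec R e) (chi_vec R f) <= k.
Proof.
move=> [se ire] [sf irf] ete etf nbe nbf [u0 [v0 e0]] [u1 [v1 f1]] [k1 [d [phi col]]].
set De := degree R e u0; set Df := degree R f u1.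
set ce := chi_vec R e; set cf := chi_vec R f.
have ce1 : 1 < ce := chi_vec_gt1 R se ete nbe e0 ire.
have cf1 : 1 < cf := chi_vec_gt1 R sf etf nbf f1 irf.
have De_gt0 : 0 < De := degree_gt0 R e0.
have Df_gt0 : 0 < Df := degree_gt0 R f1.
set mu := Num.min (De * (Df / (1 - cf))) (De / (1 - ce) * Df).
have low y : mu * qform kdelta y <= qform (adj R (cat_prod e f)) y.
  rewrite (eq_qform _ adj_cat_prod); apply: qform_kron_ge => //.
  - exact: adjC.
  - exact: adjC.
  - by rewrite pmulr_rlt0 // invr_lt0 subr_lt0.
  - by rewrite pmulr_rlt0 // invr_lt0 subr_lt0.
  - exact: qform_adj_ge se ete nbe e0 ire.
  - exact: qform_adj_le se ete nbe e0.
  - exact: qform_adj_ge sf etf nbf f1 irf.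
  - exact: qform_adj_le sf etf nbf f1.
pose w := kronv (fun a => (nonisolated e a)%:R : R) (fun b => (nonisolated f b)%:R).
have w_ge0 a : 0 <= w a by rewrite /w /kronv mulr_ge0 ?ler0n.
have := qform_bound_coloring col w_ge0 low.
rewrite (eq_qform _ adj_cat_prod) -(eq_qform _ (@kron_kdelta R T U)) !qform_kronv.
rewrite !(qform_adj_nonisolated R se ete nbe e0, qform_adj_nonisolated R sf etf nbf f1).
have nxy_gt0 := mulr_gt0 (nonisolated_norm_gt0 R e0) (nonisolated_norm_gt0 R f1).
rewrite -/De -/Df mulrACA [X in _ <= X]mulrA ler_pM2r // => mu_le.
rewrite ge_min; move: mu_le; rewrite ge_min => /orP [] h; apply/orP.
  by right; apply: (le_of_inv_bound (mulr_gt0 De_gt0 Df_gt0) cf1 k1); rewrite -mulrA.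
by left; apply: (le_of_inv_bound (mulr_gt0 De_gt0 Df_gt0) ce1 k1); rewrite mulrAC.
Qed.

End CategoricalProduct.

Lemma edge_transitive_colorable (R : realType) (T : finType) (e : rel T) :
    simple_graph e -> edge_transitive e -> has_edge e ->
  exists k : R, vector_colorable e k.
Proof.
move=> [se ire] et [u0 [v0 e0]]; have [bip|nbip] := pselect (bipartite e).
  by exists 2; apply: vector_colorable2_bipartite.
exact: vector_colorable_exists se et nbip e0 ire.
Qed.

Lemma chi_vec_ge1 (R : realType) (T : finType) (e : rel T) :
  simple_graph e -> edge_transitive e -> 1 <= chi_vec R e.
Proof.
move=> sg et; have [he|noe] := pselect (has_edge e); last by rewrite chi_vec_noedge.
apply: le_trans (chi_vec_ge2 he (edge_transitive_colorable R sg et he)).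
by rewrite ler1n.
Qed.

Section ProductBounds.
Variables (R : realType) (T U : finType) (e : rel T) (f : rel U).
Hypotheses (sge : simple_graph e) (sgf : simple_graph f).
Hypotheses (ete : edge_transitive e) (etf : edge_transitive f).
Hypotheses (he : has_edge e) (hf : has_edge f).

Let hp : has_edge (cat_prod e f). Proof. exact/has_edge_cat_prod. Qed.

Lemma chi_vec_cat_prod_le : chi_vec R (cat_prod e f) <= Num.min (chi_vec R e) (chi_vec R f).
Proof.
rewrite le_min; apply/andP; split.
  apply: (@chi_vec_hom _ _ _ _ _ fst) => //; first by move=> a b /andP [].
  exact: edge_transitive_colorable.
apply: (@chi_vec_hom _ _ _ _ _ snd) => //; first by move=> a b /andP [].
exact: edge_transitive_colorable.
Qed.

(* A bipartite factor has [chi_vec = 2], the least possible value. *)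
Lemma chi_vec_cat_prod_ge : Num.min (chi_vec R e) (chi_vec R f) <= chi_vec R (cat_prod e f).
Proof.
have [k ek] := edge_transitive_colorable R sge ete he.
apply: chi_vec_ge => // [|k' pk'].
  by exists k; apply: (vector_colorable_hom (h := fst)) ek => a b /andP [].
have k'2 := vector_colorable_ge2 hp pk'.
have [be|nbe] := pselect (bipartite e).
  by rewrite ge_min (le_trans (chi_vec_le he (vector_colorable2_bipartite R be))).
have [bf|nbf] := pselect (bipartite f).
  by rewrite ge_min (le_trans (chi_vec_le hf (vector_colorable2_bipartite R bf))) ?orbT.
exact: chi_vec_min_le_colorable.
Qed.

End ProductBounds.

Theorem corollary5p6 (R : realType) (T U : finType) (e : rel T) (f : rel U) :
  simple_graph e -> simple_graph f ->
  edge_transitive e -> edge_transitive f ->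
  chi_vec R (cat_prod e f) = Num.min (chi_vec R e) (chi_vec R f).
Proof.
move=> sge sgf ete etf.
have [[he hf]|noedge] := pselect (has_edge e /\ has_edge f).
  by apply/eqP; rewrite eq_le chi_vec_cat_prod_le ?chi_vec_cat_prod_ge.
rewrite chi_vec_noedge; last by move/has_edge_cat_prod.
have [he|noe] := pselect (has_edge e).
  by rewrite [chi_vec R f]chi_vec_noedge ?min_r ?chi_vec_ge1 // => hf; apply: noedge.
by rewrite [chi_vec R e]chi_vec_noedge ?min_l ?chi_vec_ge1.
Qed.
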